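(* Let $X_0=0$ and $X_n=\sum_{j=1}^{X_{n-1}}\xi_{n,j}+\varepsilon_n$ for $n\ge 1$, where $\{\xi_{n,j},\varepsilon_n : n,j\in\mathbb N\}$ are independent nonnegative integer-valued random variables and, for each $n$, the $\xi_{n,j}$, $j\in\mathbb N$, are identically distributed. Let $G_n(x)=\mathbb E x^{\xi_{n,1}}$, $H_n(x)=\mathbb E x^{\varepsilon_n}$, $\rho_n=G_n'(1)$, and $m_{n,k}=H_n^{(k)}(1)=\mathbb E[\varepsilon_n(\varepsilon_n-1)\cdots(\varepsilon_n-k+1)]$, assumed finite for $k=1,2$, with $G_n''(1)<\infty$. Assume (i) $\rho_n<1$ for all $n$, $\lim_{n\to\infty}\rho_n=1$, $\sum_{n=1}^\infty(1-\rho_n)=\infty$, and $\lim_{n\to\infty}G_n''(1)/(1-\rho_n)=0$; (ii) $\lim_{n\to\infty} m_{n,1}/(1-\rho_n)=\lambda$ and $\lim_{n\to\infty} m_{n,2}/(1-\rho_n)=0$. Then $X_n$ converges in distribution to $\mathrm{Poisson}(\lambda)$.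
   Context: $\mathrm{Poisson}(0)$ denotes the point mass at $0$. *)

(* classical reals. Laws of N-valued random variables are
   represented by probability mass functions nat -> R. *)
From Stdlib Require Import Reals Lra Lia Arith Factorial.
Open Scope R_scope.

Definition is_pmf (f : nat -> R) : Prop :=
  (forall j, 0 <= f j) /\ infinite_sum f 1.

Definition delta0 (k : nat) : R := if Nat.eqb k 0 then 1 else 0.

Definition conv (f g : nat -> R) (k : nat) : R :=
  sum_f_R0 (fun j => f j * g (k - j)%nat) k.

Fixpoint convpow (f : nat -> R) (i : nat) : nat -> R :=
  match i with
  | O => delta0
  | S i' => conv f (convpow f i')
  end.

(* Poisson(lambda) pmf; with 0^0 = 1 this is the point mass at 0 for lambda = 0 *)
Definition poisson_pmf (lam : R) (j : nat) : R :=
  exp (- lam) * lam ^ j / INR (fact j).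

(* Everything is read off the probability generating functions (pgfs) on
   [0,1].  Write F_n, G_n, H_n for the pgfs of X_n, of the offspring law and
   of the immigration law, and u = 1 - s.  Independence turns the recursion for
   the laws into  F_n(s) = F_{n-1}(G_n(s)) H_n(s)  (Tonelli for nonnegative
   double series plus the Cauchy product).  A second-order Taylor bound gives
   G_n(s) = 1 - rho_n u + O(G_n''(1) u^2) and H_n(s) = 1 - m_{n,1} u
   + O(m_{n,2} u^2), and comparing with the Poisson pgf exp (- lambda u)
   shows that the error of F_{n-1} at G_n(s) is contracted by the factor
   rho_n (as 1 - G_n(s) <= rho_n u) while the new generation adds at most
   B_n u.  Hence |F_n(s) - exp (- lambda u)| <= D_n u with
   D_n = rho_n D_{n-1} + B_n.
   Hypotheses (i)-(ii) say exactly that B_n = o(1 - rho_n) while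
   sum (1 - rho_n) diverges; a discrete Gronwall argument then gives
   D_n -> 0.  Finally, a continuity theorem for pgfs turns the convergence
   F_n(s) -> exp (- lambda u) on (0,1) into convergence of every probability
   P(X_n = k), hence of the distribution functions. *)

From Stdlib Require Import Reals Lra Lia Factorial.
From Coquelicot Require Import Coquelicot.
Open Scope R_scope.

Lemma Un_cv_const (c : R) : Un_cv (fun _ => c) c.
Proof. intros e He. exists 0%nat. intros. unfold Rdist. rewrite Rminus_eq_0, Rabs_R0. lra. Qed.

Lemma Un_cv_shift (u : nat -> R) (l : R) : Un_cv u l -> Un_cv (fun n => u (S n)) l.
Proof. intros Hu e He. destruct (Hu e He) as [N HN]. exists N. intros n Hn. apply HN. lia. Qed.

(* The real-valued instance of [is_series_ext]; stating the pointwise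
   equality at type R lets [ring] discharge it. *)
Lemma is_series_ext_R (a b : nat -> R) (l : R) :
  (forall n, a n = b n) -> is_series a l -> is_series b l.
Proof. apply is_series_ext. Qed.

Lemma is_series_le (a b : nat -> R) (A B : R) :
  (forall n, a n <= b n) -> is_series a A -> is_series b B -> A <= B.
Proof.
  intros Hab HA HB. apply is_series_Reals in HA, HB.
  exact (Rle_cv_lim (fun n => sum_Rle a b n (fun i _ => Hab i)) HA HB).
Qed.

Lemma partial_sum_le (a : nat -> R) (A : R) (N : nat) :
  (forall n, 0 <= a n) -> is_series a A -> sum_f_R0 a N <= A.
Proof. intros Ha HA. apply is_series_Reals in HA. exact (sum_incr a N A HA Ha). Qed.

Lemma is_series_nonneg (a : nat -> R) (A : R) :
  (forall n, 0 <= a n) -> is_series a A -> 0 <= A.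
Proof. intros Ha HA. pose proof (partial_sum_le a A 0 Ha HA). pose proof (Ha 0%nat). simpl in *. lra. Qed.

Lemma is_series_bounded (a : nat -> R) (M : R) :
  (forall n, 0 <= a n) -> (forall N, sum_f_R0 a N <= M) ->
  exists A, is_series a A /\ A <= M.
Proof.
  intros Ha HM.
  assert (Hgrow : Un_growing (sum_f_R0 a)).
  { intro n. simpl. pose proof (Ha (S n)). lra. }
  assert (Hub : has_ub (sum_f_R0 a)).
  { exists M. intros x [N ->]. apply HM. }
  destruct (growing_cv _ Hgrow Hub) as [A HA].
  exists A. split.
  - apply is_series_Reals. exact HA.
  - exact (Rle_cv_lim HM HA (Un_cv_const M)).
Qed.

Lemma is_series_sum_f_R0 (a : nat -> nat -> R) (b : nat -> R) (K : nat) :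
  (forall k, is_series (fun i => a i k) (b k)) ->
  is_series (fun i => sum_f_R0 (a i) K) (sum_f_R0 b K).
Proof.
  intro H. induction K as [|K IH]; simpl.
  - apply H.
  - exact (is_series_plus _ _ _ _ IH (H (S K))).
Qed.

Lemma row_partial_sum_le (a : nat -> nat -> R) (b c : nat -> R) (C : R) :
  (forall i k, 0 <= a i k) ->
  (forall i, is_series (a i) (b i)) ->
  (forall k, is_series (fun i => a i k) (c k)) ->
  is_series c C -> forall I, sum_f_R0 b I <= C.
Proof.
  intros Ha Hb Hc HC I.
  apply (is_series_le (fun k => sum_f_R0 (fun i => a i k) I) c _ _).
  - intro k. apply partial_sum_le; [intro; apply Ha | apply Hc].
  - apply is_series_sum_f_R0. exact Hb.
  - exact HC.
Qed.

Lemma tonelli (a : nat -> nat -> R) (b c : nat -> R) (B : R) :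
  (forall i k, 0 <= a i k) ->
  (forall i, is_series (a i) (b i)) ->
  (forall k, is_series (fun i => a i k) (c k)) ->
  is_series b B -> is_series c B.
Proof.
  intros Ha Hb Hc HB.
  assert (Hc0 : forall k, 0 <= c k).
  { intro k. exact (is_series_nonneg _ _ (fun i => Ha i k) (Hc k)). }
  destruct (is_series_bounded c B Hc0) as [C [HC HCB]].
  { exact (row_partial_sum_le (fun k i => a i k) c b B (fun k i => Ha i k) Hc Hb HB). }
  assert (HBC : B <= C).
  { apply is_series_Reals in HB.
    exact (Rle_cv_lim (row_partial_sum_le a b c C Ha Hb Hc HC) HB (Un_cv_const C)). }
  replace B with C by lra. exact HC.
Qed.

Definition pgf (a : nat -> R) (s : R) : R := Series (fun j => a j * s ^ j).

Lemma pmf_is_series (a : nat -> R) : is_pmf a -> is_series a 1.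
Proof. intros [_ H]. apply is_series_Reals. exact H. Qed.

Lemma pow_unit_interval (s : R) (n : nat) : 0 <= s <= 1 -> 0 <= s ^ n <= 1.
Proof. intro Hs. split; [apply pow_le; lra | rewrite <- (pow1 n); apply pow_incr; lra]. Qed.

Lemma pgf_term_bounds (a : nat -> R) (s : R) (j : nat) :
  is_pmf a -> 0 <= s <= 1 -> 0 <= a j * s ^ j <= a j.
Proof.
  intros [Ha _] Hs. pose proof (Ha j). pose proof (pow_unit_interval s j Hs). nra.
Qed.

Lemma pgf_series (a : nat -> R) (s : R) :
  is_pmf a -> 0 <= s <= 1 -> is_series (fun j => a j * s ^ j) (pgf a s).
Proof.
  intros Ha Hs.
  destruct (is_series_bounded (fun j => a j * s ^ j) 1) as [V [HV _]].
  - intro j. apply (pgf_term_bounds a s j Ha Hs).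
  - intro N. apply Rle_trans with (sum_f_R0 a N).
    + apply sum_Rle. intros j _. apply (pgf_term_bounds a s j Ha Hs).
    + apply partial_sum_le; [apply Ha | apply pmf_is_series, Ha].
  - unfold pgf. rewrite (is_series_unique _ _ HV). exact HV.
Qed.

Lemma pgf_range (a : nat -> R) (s : R) :
  is_pmf a -> 0 <= s <= 1 -> 0 <= pgf a s <= 1.
Proof.
  intros Ha Hs. pose proof (pgf_series a s Ha Hs) as HV. split.
  - exact (is_series_nonneg _ _ (fun j => proj1 (pgf_term_bounds a s j Ha Hs)) HV).
  - exact (is_series_le _ _ _ _ (fun j => proj2 (pgf_term_bounds a s j Ha Hs)) HV (pmf_is_series a Ha)).
Qed.

Lemma pgf_at_one (a : nat -> R) : is_pmf a -> pgf a 1 = 1.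
Proof.
  intro Ha. apply (is_series_unique (fun j => a j * 1 ^ j)).
  apply (is_series_ext_R a); [intro j; rewrite pow1, Rmult_1_r; reflexivity | apply pmf_is_series, Ha].
Qed.

Lemma conv_nonneg (a b : nat -> R) (k : nat) :
  (forall n, 0 <= a n) -> (forall n, 0 <= b n) -> 0 <= conv a b k.
Proof. intros Ha Hb. apply cond_pos_sum. intro j. apply Rmult_le_pos; auto. Qed.

Lemma conv_series (a b : nat -> R) (s A B : R) :
  (forall n, 0 <= a n) -> (forall n, 0 <= b n) -> 0 <= s ->
  is_series (fun j => a j * s ^ j) A -> is_series (fun j => b j * s ^ j) B ->
  is_series (fun k => conv a b k * s ^ k) (A * B).
Proof.
  intros Ha Hb Hs HA HB.
  refine (is_series_ext_R _ _ _ _ (is_series_mult_pos _ _ _ _ HA HB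
           (fun n => Rmult_le_pos _ _ (Ha n) (pow_le _ n Hs))
           (fun n => Rmult_le_pos _ _ (Hb n) (pow_le _ n Hs)))).
  intro k. unfold conv. rewrite Rmult_comm, scal_sum. apply sum_eq. intros j Hj.
  replace (s ^ k) with (s ^ j * s ^ (k - j)) by (rewrite <- pow_add; f_equal; lia).
  ring.
Qed.

Lemma delta0_nonneg (k : nat) : 0 <= delta0 k.
Proof. unfold delta0. destruct (Nat.eqb k 0); lra. Qed.

Lemma delta0_series (s : R) : is_series (fun k => delta0 k * s ^ k) 1.
Proof.
  apply is_series_Reals. apply (Un_cv_ext (fun _ => 1)); [|apply Un_cv_const].
  intro n. induction n as [|n IH]; simpl; unfold delta0 in *; simpl in *; lra.
Qed.

Lemma convpow_nonneg (a : nat -> R) (i k : nat) :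
  (forall n, 0 <= a n) -> 0 <= convpow a i k.
Proof.
  intro Ha. revert k. induction i as [|i IH]; intro k; simpl.
  - apply delta0_nonneg.
  - apply conv_nonneg; auto.
Qed.

Lemma convpow_series (a : nat -> R) (s G : R) (i : nat) :
  (forall n, 0 <= a n) -> 0 <= s -> is_series (fun j => a j * s ^ j) G ->
  is_series (fun k => convpow a i k * s ^ k) (G ^ i).
Proof.
  intros Ha Hs HG. induction i as [|i IH]; simpl.
  - apply delta0_series.
  - apply conv_series; auto. intro n. apply convpow_nonneg, Ha.
Qed.

(* One generation of a branching process with immigration: if
   Y k = sum_i X i * P(xi_1 + ... + xi_i + eps = k), then the generating
   series of Y is F_X(G_P(s)) * G_Q(s).  The double series is nonnegative,
   so the order of summation may be exchanged. *)
Lemma branching_series (X P Q Y : nat -> R) (s : R) :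
  is_pmf X -> is_pmf P -> is_pmf Q -> 0 <= s <= 1 ->
  (forall k, is_series (fun i => X i * conv (convpow P i) Q k) (Y k)) ->
  is_series (fun k => Y k * s ^ k) (pgf X (pgf P s) * pgf Q s).
Proof.
  intros HX HP HQ Hs HY.
  set (t := pgf P s). set (h := pgf Q s).
  assert (Hpow : forall i, is_series (fun k => convpow P i k * s ^ k) (t ^ i)).
  { intro i. exact (convpow_series P s t i (proj1 HP) (proj1 Hs) (pgf_series P s HP Hs)). }
  apply (tonelli (fun i k => X i * conv (convpow P i) Q k * s ^ k)
                 (fun i => X i * (t ^ i * h))).
  - intros i k. apply Rmult_le_pos; [apply Rmult_le_pos | apply pow_le; lra].
    + apply HX.
    + apply conv_nonneg; [intro; apply convpow_nonneg, HP | apply HQ].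
  - intro i. rewrite (Rmult_comm (X i)).
    refine (is_series_ext_R _ _ _ _ (is_series_scal_r (X i) _ _
      (conv_series _ _ s _ _ (fun k => convpow_nonneg P i k (proj1 HP)) (proj1 HQ)
         (proj1 Hs) (Hpow i) (pgf_series Q s HQ Hs)))).
    intro k. simpl. ring.
  - intro k. exact (is_series_scal_r (s ^ k) _ _ (HY k)).
  - refine (is_series_ext_R _ _ _ _ (is_series_scal_r h _ _
      (pgf_series X t HX (pgf_range P s HP Hs)))).
    intro i. simpl. ring.
Qed.

Lemma branching_step (X P Q Y : nat -> R) :
  is_pmf X -> is_pmf P -> is_pmf Q ->
  (forall k, is_series (fun i => X i * conv (convpow P i) Q k) (Y k)) ->
  is_pmf Y /\
  forall s, 0 <= s <= 1 -> pgf Y s = pgf X (pgf P s) * pgf Q s.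
Proof.
  intros HX HP HQ HY.
  assert (HY1 : is_series Y 1).
  { pose proof (branching_series X P Q Y 1 HX HP HQ ltac:(lra) HY) as H.
    rewrite (pgf_at_one P HP), (pgf_at_one Q HQ), (pgf_at_one X HX), Rmult_1_r in H.
    refine (is_series_ext_R _ _ _ _ H). intro k. rewrite pow1, Rmult_1_r. reflexivity. }
  assert (HYpmf : is_pmf Y).
  { split.
    - intro k. refine (is_series_nonneg _ _ _ (HY k)). intro i.
      apply Rmult_le_pos; [apply HX | apply conv_nonneg; [|apply HQ]].
      intro; apply convpow_nonneg, HP.
    - apply is_series_Reals. exact HY1. }
  split; [exact HYpmf|].
  intros s Hs. apply (is_series_unique (fun k => Y k * s ^ k)).
  exact (branching_series X P Q Y s HX HP HQ Hs HY).
Qed.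

Lemma pow_second_order (u : R) (j : nat) :
  0 <= u <= 1 -> 0 <= (1 - u) ^ j - 1 + INR j * u <= INR j * (INR j - 1) / 2 * u ^ 2.
Proof.
  intro Hu. induction j as [|j IH]; [simpl; lra|].
  rewrite S_INR. simpl pow. set (x := (1 - u) ^ j) in *. pose proof (pos_INR j).
  replace ((1 - u) * x - 1 + (INR j + 1) * u)
    with ((x - 1 + INR j * u) * (1 - u) + INR j * u ^ 2) by ring.
  assert (0 <= INR j * u ^ 2) by (apply Rmult_le_pos; nra).
  assert (0 <= (x - 1 + INR j * u) * u) by nra.
  split; nra.
Qed.

Lemma pgf_second_order (a : nat -> R) (s M1 M2 : R) :
  is_pmf a -> 0 <= s <= 1 ->
  is_series (fun j => INR j * a j) M1 ->
  is_series (fun j => INR j * (INR j - 1) * a j) M2 ->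
  0 <= pgf a s - 1 + M1 * (1 - s) <= M2 * ((1 - s) ^ 2 / 2).
Proof.
  intros Ha Hs HM1 HM2.
  assert (HS : is_series (fun j => a j * s ^ j - a j + INR j * a j * (1 - s))
                         (pgf a s - 1 + M1 * (1 - s))).
  { exact (is_series_plus _ _ _ _
             (is_series_minus _ _ _ _ (pgf_series a s Ha Hs) (pmf_is_series a Ha))
             (is_series_scal_r (1 - s) _ _ HM1)). }
  assert (Hterm : forall j, a j * s ^ j - a j + INR j * a j * (1 - s)
                            = a j * ((1 - (1 - s)) ^ j - 1 + INR j * (1 - s))).
  { intro j. replace (1 - (1 - s)) with s by ring. ring. }
  assert (Hu : 0 <= 1 - s <= 1) by lra.
  pose proof (proj1 Ha) as Ha0.
  split.
  - refine (is_series_nonneg _ _ _ HS). intro j. rewrite Hterm.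
    apply Rmult_le_pos; [apply Ha0 | apply pow_second_order, Hu].
  - refine (is_series_le _ _ _ _ _ HS (is_series_scal_r ((1 - s) ^ 2 / 2) _ _ HM2)).
    intro j. rewrite Hterm.
    replace (INR j * (INR j - 1) * a j * ((1 - s) ^ 2 / 2))
      with (a j * (INR j * (INR j - 1) / 2 * (1 - s) ^ 2)) by field.
    apply Rmult_le_compat_l; [apply Ha0 | apply pow_second_order, Hu].
Qed.

Lemma exp_le_one_nonpos (z : R) : z <= 0 -> exp z <= 1.
Proof.
  intro Hz. pose proof (exp_ineq1_le (- z)). pose proof (exp_pos z).
  assert (exp z * exp (- z) = 1) by (rewrite <- exp_plus, Rplus_opp_r; apply exp_0).
  nra.
Qed.

Lemma exp_lipschitz_nonpos (x y : R) :
  x <= 0 -> y <= 0 -> Rabs (exp x - exp y) <= Rabs (x - y).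
Proof.
  assert (Hcase : forall x y, y <= x -> x <= 0 -> Rabs (exp x - exp y) <= Rabs (x - y)).
  { clear. intros x y Hyx Hx.
    assert (Hy : exp y = exp x * exp (y - x)) by (rewrite <- exp_plus; f_equal; ring).
    pose proof (exp_ineq1_le (y - x)). pose proof (exp_le_one_nonpos (y - x) ltac:(lra)).
    pose proof (exp_le_one_nonpos x Hx). pose proof (exp_pos x).
    rewrite Hy, !Rabs_pos_eq by nra. nra. }
  intros Hx Hy. destruct (Rle_dec y x) as [Hyx | Hxy].
  - exact (Hcase x y Hyx Hx).
  - rewrite Rabs_minus_sym, (Rabs_minus_sym x). apply Hcase; lra.
Qed.

(* exp a >= 1 + a + a^2/2 for a >= 0: the exponential series has
   nonnegative terms. *)
Lemma exp_ge_second_order (a : R) : 0 <= a -> 1 + a + a ^ 2 / 2 <= exp a.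
Proof.
  intro Ha.
  assert (Hpos : forall n, 0 <= / INR (fact n) * a ^ n).
  { intro n. apply Rmult_le_pos; [left; apply Rinv_0_lt_compat, lt_0_INR, lt_O_fact | apply pow_le, Ha]. }
  pose proof (sum_incr _ 2 _ (proj2_sig (exist_exp a)) Hpos) as H.
  simpl in H. unfold exp. lra.
Qed.

Lemma exp_neg_second_order (a : R) :
  0 <= a -> 1 - a <= exp (- a) <= 1 - a + a ^ 2 / 2.
Proof.
  intro Ha. pose proof (exp_ineq1_le (- a)). split; [lra|].
  pose proof (exp_ge_second_order a Ha). pose proof (exp_pos (- a)).
  assert (exp (- a) * exp a = 1) by (rewrite <- exp_plus, Rplus_opp_l; apply exp_0).
  (* (1 - a + a^2/2) (1 + a + a^2/2) = 1 + a^4/4 >= 1 *)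
  assert (1 <= (1 - a + a ^ 2 / 2) * (1 + a + a ^ 2 / 2)) by nra.
  nra.
Qed.

(* Let u = 1 - s,
   t = G(s) the offspring and h = H(s) the immigration generating function,
   both controlled to second order by their factorial moments.  Then the
   Poisson(lam) generating function evaluated at t and multiplied by h stays
   within [step_bound * u] of the Poisson(lam) generating function at s. *)
Definition step_bound (lam r m1 m2 g2 : R) : R :=
  (m2 + m1 ^ 2) / 2 + Rabs (lam * (1 - r) - m1) + lam * g2 / 2.

Lemma step_bound_nonneg (lam r m1 m2 g2 : R) :
  0 <= lam -> 0 <= m2 -> 0 <= g2 -> 0 <= step_bound lam r m1 m2 g2.
Proof.
  intros Hlam Hm2 Hg2. unfold step_bound.
  pose proof (Rabs_pos (lam * (1 - r) - m1)). pose proof (pow2_ge_0 m1).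
  assert (0 <= lam * g2) by (apply Rmult_le_pos; assumption). lra.
Qed.

Lemma immigration_vs_exp (m1 m2 u h : R) :
  0 <= m1 -> 0 <= u ->
  0 <= h - 1 + m1 * u <= m2 * (u ^ 2 / 2) ->
  Rabs (h - exp (- (m1 * u))) <= (m2 + m1 ^ 2) * (u ^ 2 / 2).
Proof.
  intros Hm1 Hu Hh.
  destruct (exp_neg_second_order (m1 * u) ltac:(nra)) as [Hlo Hhi].
  apply Rabs_le. split; nra.
Qed.

(* The one-step estimate: the offspring exponent lam (1 - t) differs from
   lam u by lam (1 - r) u + O(g2 u^2), and h from exp (- m1 u) by O(u^2). *)
Lemma step_estimate (lam r m1 m2 g2 u t h : R) :
  0 <= lam -> 0 <= m1 -> 0 <= m2 -> 0 <= g2 -> 0 <= u <= 1 -> t <= 1 ->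
  0 <= t - 1 + r * u <= g2 * (u ^ 2 / 2) ->
  0 <= h - 1 + m1 * u <= m2 * (u ^ 2 / 2) ->
  Rabs (exp (- lam * (1 - t)) * h - exp (- lam * u)) <= step_bound lam r m1 m2 g2 * u.
Proof.
  intros Hlam Hm1 Hm2 Hg2 Hu Ht Hgen Himm.
  assert (Hu2 : u ^ 2 <= u) by nra.
  set (x := - lam * (1 - t)).
  assert (Hx : x <= 0) by (unfold x; nra).
  assert (Hsplit : exp x * h - exp (- lam * u)
    = exp x * (h - exp (- (m1 * u))) + (exp (x - m1 * u) - exp (- lam * u))).
  { replace (exp (x - m1 * u)) with (exp x * exp (- (m1 * u)))
      by (rewrite <- exp_plus; f_equal; ring).
    ring. }
  assert (Himm' : Rabs (exp x * (h - exp (- (m1 * u)))) <= (m2 + m1 ^ 2) / 2 * u).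
  { rewrite Rabs_mult, (Rabs_pos_eq (exp x)) by (left; apply exp_pos).
    pose proof (immigration_vs_exp m1 m2 u h Hm1 (proj1 Hu) Himm).
    pose proof (exp_le_one_nonpos x Hx). pose proof (exp_pos x).
    pose proof (Rabs_pos (h - exp (- (m1 * u)))).
    assert (0 <= m1 ^ 2) by nra. nra. }
  assert (Hexp : Rabs (exp (x - m1 * u) - exp (- lam * u))
                 <= (Rabs (lam * (1 - r) - m1) + lam * g2 / 2) * u).
  { eapply Rle_trans; [apply exp_lipschitz_nonpos; nra|].
    replace (x - m1 * u - - lam * u)
      with (lam * (t - 1 + r * u) + (lam * (1 - r) - m1) * u) by (unfold x; ring).
    eapply Rle_trans; [apply Rabs_triang|].
    rewrite Rabs_mult, (Rabs_pos_eq lam), Rabs_pos_eq by nra.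
    rewrite Rabs_mult, (Rabs_pos_eq u) by lra.
    assert (lam * (t - 1 + r * u) <= lam * (g2 * (u ^ 2 / 2)))
      by (apply Rmult_le_compat_l; lra).
    assert (lam * g2 * u ^ 2 <= lam * g2 * u)
      by (apply Rmult_le_compat_l; [apply Rmult_le_pos|]; lra).
    lra. }
  unfold step_bound. rewrite Hsplit.
  eapply Rle_trans; [apply Rabs_triang|]. lra.
Qed.

Fixpoint err_bound (r B : nat -> R) (D0 : R) (n : nat) : R :=
  match n with
  | O => D0
  | S m => r (S m) * err_bound r B D0 m + B (S m)
  end.

Lemma err_bound_nonneg (r B : nat -> R) (D0 : R) (n : nat) :
  (forall n, 0 <= r (S n)) -> (forall n, 0 <= B (S n)) -> 0 <= D0 ->
  0 <= err_bound r B D0 n.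
Proof.
  intros Hr HB HD. induction n as [|n IH]; simpl; [exact HD|].
  pose proof (Hr n). pose proof (HB n). nra.
Qed.

Lemma contraction_decay (y r : nat -> R) (N : nat) :
  (forall n, 0 <= r (S n)) ->
  (forall n, (N <= n)%nat -> y (S (S n)) <= r (S (S n)) * y (S n)) ->
  let P := sum_f_R0 (fun n => 1 - r (S n)) in
  forall k, y (S (N + k)) <= exp (- (P (N + k)%nat - P N)) * Rmax (y (S N)) 0.
Proof.
  intros Hr Hy P k. induction k as [|k IH].
  - rewrite Nat.add_0_r, Rminus_eq_0, Ropp_0, exp_0, Rmult_1_l. apply Rmax_l.
  - rewrite Nat.add_succ_r.
    set (c := r (S (S (N + k)))).
    assert (HP : P (S (N + k)) = P (N + k)%nat + (1 - c)) by reflexivity.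
    assert (Hexp : exp (- (P (S (N + k)) - P N))
                   = exp (- (1 - c)) * exp (- (P (N + k)%nat - P N))).
    { rewrite HP, <- exp_plus. f_equal. ring. }
    rewrite Hexp, Rmult_assoc.
    set (Z := exp (- (P (N + k)%nat - P N)) * Rmax (y (S N)) 0) in *.
    assert (HZ : 0 <= Z).
    { apply Rmult_le_pos; [left; apply exp_pos | apply Rmax_r]. }
    assert (Hc : 0 <= c) by apply Hr.
    assert (Hcexp : c <= exp (- (1 - c))) by (pose proof (exp_ineq1_le (- (1 - c))); lra).
    eapply Rle_trans; [apply Hy; lia|]. fold c.
    apply Rle_trans with (c * Z); [apply Rmult_le_compat_l; assumption|].
    apply Rmult_le_compat_r; assumption.
Qed.

Lemma exp_decay_small (x Y eta : R) :
  0 <= Y -> 0 < eta -> 2 * Y / eta < x -> exp (- x) * Y < eta / 2.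
Proof.
  intros HY Heta Hx.
  assert (H2Y : 2 * Y < eta * x).
  { apply (Rmult_lt_compat_r eta) in Hx; [|exact Heta].
    unfold Rdiv in Hx. rewrite Rmult_assoc, Rinv_l, Rmult_1_r in Hx by lra. lra. }
  pose proof (exp_ineq1_le x). pose proof (exp_pos (- x)).
  assert (exp (- x) * exp x = 1) by (rewrite <- exp_plus, Rplus_opp_l; apply exp_0).
  assert (exp (- x) * (1 + x) <= 1) by nra.
  assert (0 <= x) by (assert (0 <= 2 * Y / eta) by (unfold Rdiv; apply Rmult_le_pos; [lra | left; apply Rinv_0_lt_compat, Heta]); lra).
  nra.
Qed.

(* D_n -> 0: from some N on the forcing is at most (1 - r) eta/2, so
   D - eta/2 contracts, and the divergent defect sum kills it. *)
Lemma err_bound_cv (r B : nat -> R) (D0 : R) :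
  (forall n, 0 <= r (S n) < 1) -> (forall n, 0 <= B (S n)) -> 0 <= D0 ->
  Un_cv (fun n => B (S n) / (1 - r (S n))) 0 ->
  cv_infty (sum_f_R0 (fun n => 1 - r (S n))) ->
  Un_cv (err_bound r B D0) 0.
Proof.
  intros Hr HB HD0 Hratio Hdiv eta Heta.
  set (D := err_bound r B D0). set (P := sum_f_R0 (fun n => 1 - r (S n))).
  destruct (Hratio (eta / 2) ltac:(lra)) as [N HN].
  assert (Hforce : forall n, (N <= n)%nat -> B (S n) <= (1 - r (S n)) * (eta / 2)).
  { intros n Hn. specialize (HN n Hn). pose proof (Hr n).
    unfold Rdist in HN. rewrite Rminus_0_r in HN.
    pose proof (Rle_abs (B (S n) / (1 - r (S n)))).
    replace (B (S n)) with ((B (S n) / (1 - r (S n))) * (1 - r (S n))) by (field; lra).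
    rewrite Rmult_comm. apply Rmult_le_compat_l; lra. }
  set (Y := Rmax (D (S N) - eta / 2) 0).
  assert (Hdecay := contraction_decay (fun n => D n - eta / 2) r N
                      (fun n => proj1 (Hr n))).
  assert (Hcontr : forall n, (N <= n)%nat ->
            D (S (S n)) - eta / 2 <= r (S (S n)) * (D (S n) - eta / 2)).
  { intros n Hn. change (D (S (S n))) with (r (S (S n)) * D (S n) + B (S (S n))).
    pose proof (Hforce (S n) ltac:(lia)). lra. }
  specialize (Hdecay Hcontr). fold P Y in Hdecay.
  destruct (Hdiv (P N + 2 * Y / eta)) as [N0 HN0].
  exists (S (N + N0)). intros [|m] Hm; [lia|].
  specialize (Hdecay (m - N)%nat). replace (N + (m - N))%nat with m in Hdecay by lia.
  fold Y in Hdecay.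
  assert (Hsmall : exp (- (P m - P N)) * Y < eta / 2).
  { apply exp_decay_small; [apply Rmax_r | exact Heta |].
    pose proof (HN0 m ltac:(lia)) as Hm'. change (sum_f_R0 _ m) with (P m) in Hm'. lra. }
  assert (HDm : 0 <= D (S m)).
  { apply err_bound_nonneg; [intro; apply Hr | exact HB | exact HD0]. }
  unfold Rdist. rewrite Rminus_0_r, Rabs_pos_eq by exact HDm. lra.
Qed.

Lemma step_bound_ratio_cv (lam : R) (r g2 m1 m2 : nat -> R) :
  (forall n, r n < 1) -> Un_cv r 1 ->
  Un_cv (fun n => g2 n / (1 - r n)) 0 ->
  Un_cv (fun n => m1 n / (1 - r n)) lam ->
  Un_cv (fun n => m2 n / (1 - r n)) 0 ->
  Un_cv (fun n => step_bound lam (r n) (m1 n) (m2 n) (g2 n) / (1 - r n)) 0.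
Proof.
  intros Hr Hr1 HG HM1 HM2.
  set (M1 := fun n => m1 n / (1 - r n)) in HM1.
  assert (Hdefect : Un_cv (fun n => 1 - r n) 0).
  { pose proof (CV_minus _ _ _ _ (Un_cv_const 1) Hr1) as H.
    rewrite Rminus_eq_0 in H. exact H. }
  (* m1 n = M1 n * (1 - r n) tends to lam * 0 *)
  assert (Hm1 : Un_cv m1 0).
  { pose proof (CV_mult _ _ _ _ HM1 Hdefect) as H. rewrite Rmult_0_r in H.
    refine (Un_cv_ext _ _ _ _ H). intro n. unfold M1. field.
    pose proof (Hr n). lra. }
  pose proof (CV_plus _ _ _ _
    (CV_plus _ _ _ _
      (CV_plus _ _ _ _ (CV_mult _ _ _ _ HM2 (Un_cv_const (/ 2)))
                       (CV_mult _ _ _ _ (CV_mult _ _ _ _ HM1 Hm1) (Un_cv_const (/ 2))))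
      (cv_cvabs _ _ (CV_minus _ _ _ _ (Un_cv_const lam) HM1)))
    (CV_mult _ _ _ _ (CV_mult _ _ _ _ (Un_cv_const lam) HG) (Un_cv_const (/ 2)))) as H.
  replace (0 * / 2 + lam * 0 * / 2 + Rabs (lam - lam) + lam * 0 * / 2) with 0 in H
    by (rewrite Rminus_eq_0, Rabs_R0; ring).
  refine (Un_cv_ext _ _ _ _ H). intro n. simpl. unfold step_bound, M1.
  assert (Hpos : 0 < 1 - r n) by (pose proof (Hr n); lra).
  replace (lam * (1 - r n) - m1 n) with ((lam - m1 n / (1 - r n)) * (1 - r n)) by (field; lra).
  rewrite Rabs_mult, (Rabs_pos_eq (1 - r n)) by lra.
  field. lra.
Qed.

(* Coefficient k
   is recovered from the value at a small s after removing the (already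
   convergent) coefficients j < k; the remainder is at most s^(k+1). *)

Fixpoint sum_below (f : nat -> R) (k : nat) : R :=
  match k with
  | O => 0
  | S k' => sum_below f k' + f k'
  end.

Lemma sum_f_R0_below (f : nat -> R) (k : nat) : sum_f_R0 f k = sum_below f (S k).
Proof. induction k as [|k IH]; simpl in *; [ring | rewrite IH; reflexivity]. Qed.

Lemma sum_below_minus (f g : nat -> R) (k : nat) :
  sum_below (fun j => f j - g j) k = sum_below f k - sum_below g k.
Proof. induction k as [|k IH]; simpl; [ring | rewrite IH; ring]. Qed.

Lemma sum_below_cv (f : nat -> nat -> R) (g : nat -> R) (k : nat) :
  (forall j, (j < k)%nat -> Un_cv (fun n => f n j) (g j)) ->
  Un_cv (fun n => sum_below (f n) k) (sum_below g k).
Proof.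
  induction k as [|k IH]; intro H; simpl.
  - apply Un_cv_const.
  - apply CV_plus; [apply IH; intros; apply H; lia | apply H; lia].
Qed.

Lemma partial_sum_mono (a : nat -> R) (N k : nat) :
  (forall n, 0 <= a n) -> (N <= k)%nat -> sum_f_R0 a N <= sum_f_R0 a k.
Proof.
  intros Ha Hk. induction Hk as [|k _ IH]; [lra|].
  rewrite tech5. pose proof (Ha (S k)). lra.
Qed.

Lemma pgf_remainder (b : nat -> R) (s : R) (k : nat) :
  is_pmf b -> 0 <= s <= 1 ->
  0 <= pgf b s - sum_f_R0 (fun j => b j * s ^ j) k <= s ^ S k.
Proof.
  intros Hb Hs.
  pose proof (pgf_series b s Hb Hs) as HV.
  assert (Hterm := fun j => pgf_term_bounds b s j Hb Hs).
  split; [pose proof (partial_sum_le _ _ k (fun j => proj1 (Hterm j)) HV); lra|].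
  assert (Hsk : 0 <= s ^ S k) by (apply pow_le; lra).
  assert (Hpartial : forall N, sum_f_R0 (fun j => b j * s ^ j) N
            <= sum_f_R0 (fun j => b j * s ^ j) k + s ^ S k * sum_f_R0 b N).
  { assert (Hb0 : forall N, 0 <= sum_f_R0 b N)
      by (intro; apply cond_pos_sum; apply Hb).
    induction N as [|N IH].
    - pose proof (partial_sum_mono _ 0 k (fun j => proj1 (Hterm j)) ltac:(lia)).
      pose proof (Hb0 0%nat). nra.
    - destruct (Compare_dec.le_lt_dec (S N) k) as [HNk | HkN].
      + pose proof (partial_sum_mono _ (S N) k (fun j => proj1 (Hterm j)) HNk).
        pose proof (Hb0 (S N)). nra.
      + rewrite !tech5.
        assert (s ^ S N <= s ^ S k).
        { replace (S N) with (S k + (N - k))%nat by lia. rewrite pow_add.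
          pose proof (pow_unit_interval s (N - k) Hs). nra. }
        pose proof (proj1 Hb (S N)). nra. }
  apply is_series_Reals in HV.
  enough (pgf b s <= sum_f_R0 (fun j => b j * s ^ j) k + s ^ S k) by lra.
  refine (Rle_cv_lim _ HV (Un_cv_const (sum_f_R0 (fun j => b j * s ^ j) k + s ^ S k))).
  intro N. pose proof (Hpartial N).
  pose proof (partial_sum_le b 1 N (proj1 Hb) (pmf_is_series b Hb)). nra.
Qed.

Lemma lower_coefficients_cv (an : nat -> nat -> R) (a : nat -> R) (s : R) (k : nat) :
  (forall j, (j < k)%nat -> Un_cv (fun n => an n j) (a j)) ->
  Un_cv (fun n => sum_below (fun j => an n j * s ^ j - a j * s ^ j) k) 0.
Proof.
  intro Hcv.
  assert (Hzero : sum_below (fun _ => 0) k = 0)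
    by (clear; induction k as [|k IH]; simpl; [reflexivity | rewrite IH; ring]).
  rewrite <- Hzero. apply sum_below_cv. intros j Hj.
  pose proof (CV_minus _ _ _ _ (CV_mult _ _ _ _ (Hcv j Hj) (Un_cv_const (s ^ j)))
                (Un_cv_const (a j * s ^ j))) as H.
  rewrite Rminus_eq_0 in H. exact H.
Qed.

(* At s = min (1/2, eta/4)
   coefficient k times s^k equals F_n(s) - F(s) minus the lower coefficients
   minus the two remainders, each in [0, s^(k+1)]. *)
Lemma pgf_coefficients_cv (an : nat -> nat -> R) (a : nat -> R) :
  (forall n, is_pmf (an n)) -> is_pmf a ->
  (forall s, 0 < s < 1 -> Un_cv (fun n => pgf (an n) s) (pgf a s)) ->
  forall k, Un_cv (fun n => an n k) (a k).
Proof.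
  intros Han Ha Hpgf k.
  induction k as [k IH] using (well_founded_induction Wf_nat.lt_wf).
  intros eta Heta.
  set (s := Rmin (1 / 2) (eta / 4)).
  assert (Hs : 0 < s <= 1 / 2) by (split; [apply Rmin_glb_lt; lra | apply Rmin_l]).
  assert (Hs_eta : s <= eta / 4) by apply Rmin_r.
  clearbody s.
  assert (Hs01 : 0 <= s <= 1) by lra.
  assert (Hsk : 0 < s ^ k) by (apply pow_lt; lra).
  set (low := fun n => sum_below (fun j => an n j * s ^ j - a j * s ^ j) k).
  assert (Hlow : Un_cv low 0) by exact (lower_coefficients_cv an a s k IH).
  destruct (CV_minus _ _ _ _ (Hpgf s ltac:(lra)) Hlow (eta / 2 * s ^ k)) as [N HN].
  { apply Rmult_lt_0_compat; lra. }
  exists N. intros n Hn. specialize (HN n Hn). unfold Rdist in *. rewrite Rminus_0_r in HN.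
  pose proof (pgf_remainder (an n) s k (Han n) Hs01) as Tn.
  pose proof (pgf_remainder a s k Ha Hs01) as T.
  rewrite !sum_f_R0_below in Tn, T. simpl sum_below in Tn, T.
  assert (Hsplit : (an n k - a k) * s ^ k
     = (pgf (an n) s - low n - pgf a s)
       - ((pgf (an n) s - (sum_below (fun j => an n j * s ^ j) k + an n k * s ^ k))
          - (pgf a s - (sum_below (fun j => a j * s ^ j) k + a k * s ^ k)))).
  { unfold low. rewrite sum_below_minus. ring. }
  assert (Hprod : Rabs (an n k - a k) * s ^ k
                  <= Rabs (pgf (an n) s - low n - pgf a s) + s * s ^ k).
  { rewrite <- (Rabs_pos_eq (s ^ k)) at 1 by lra. rewrite <- Rabs_mult, Hsplit.
    eapply Rle_trans; [apply Rabs_triang|]. rewrite Rabs_Ropp.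
    apply Rplus_le_compat_l. apply Rabs_le. simpl pow in Tn, T. lra. }
  apply (Rmult_lt_reg_r (s ^ k)); [exact Hsk|]. nra.
Qed.

Lemma poisson_series (lam s : R) :
  is_series (fun j => poisson_pmf lam j * s ^ j) (exp (- lam * (1 - s))).
Proof.
  pose proof (proj2_sig (exist_exp (lam * s))) as Hexp.
  apply is_series_Reals in Hexp.
  replace (exp (- lam * (1 - s))) with (exp (lam * s) * exp (- lam))
    by (rewrite <- exp_plus; f_equal; ring).
  refine (is_series_ext_R _ _ _ _ (is_series_scal_r (exp (- lam)) _ _ Hexp)).
  intro j. unfold poisson_pmf. rewrite Rpow_mult_distr. unfold Rdiv. ring.
Qed.

Lemma poisson_is_pmf (lam : R) : 0 <= lam -> is_pmf (poisson_pmf lam).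
Proof.
  intro Hlam. split.
  - intro j. unfold poisson_pmf, Rdiv.
    apply Rmult_le_pos; [apply Rmult_le_pos; [left; apply exp_pos | apply pow_le, Hlam]|].
    left. apply Rinv_0_lt_compat, lt_0_INR, lt_O_fact.
  - apply is_series_Reals.
    pose proof (poisson_series lam 1) as H.
    rewrite Rminus_eq_0, Rmult_0_r, exp_0 in H.
    refine (is_series_ext_R _ _ _ _ H). intro j. rewrite pow1. ring.
Qed.

Lemma poisson_pgf (lam s : R) : pgf (poisson_pmf lam) s = exp (- lam * (1 - s)).
Proof. apply is_series_unique, poisson_series. Qed.

Lemma delta0_pgf (s : R) : pgf delta0 s = 1.
Proof. apply is_series_unique, delta0_series. Qed.

Lemma delta0_is_pmf : is_pmf delta0.
Proof.
  split; [exact delta0_nonneg|].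
  apply is_series_Reals. refine (is_series_ext_R _ _ _ _ (delta0_series 1)).
  intro k. rewrite pow1. ring.
Qed.

Lemma factorial_moments_nonneg (a : nat -> R) (M1 M2 : R) :
  is_pmf a ->
  is_series (fun j => INR j * a j) M1 ->
  is_series (fun j => INR j * (INR j - 1) * a j) M2 ->
  0 <= M1 /\ 0 <= M2.
Proof.
  intros [Ha _] HM1 HM2. split.
  - refine (is_series_nonneg _ _ _ HM1). intro j.
    apply Rmult_le_pos; [apply pos_INR | apply Ha].
  - refine (is_series_nonneg _ _ _ HM2). intro j.
    apply Rmult_le_pos; [|apply Ha].
    destruct j as [|j]; [simpl; lra|]. rewrite S_INR. pose proof (pos_INR j). nra.
Qed.

(* The branching process with immigration of the theorem.  Generation n >= 1
   has offspring law p n and immigration law q n. *)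
Section BranchingWithImmigration.

Variables (p q pX : nat -> nat -> R) (rho g2 m1 m2 : nat -> R) (lambda : R).
Hypothesis Hp : forall n, (1 <= n)%nat -> is_pmf (p n).
Hypothesis Hq : forall n, (1 <= n)%nat -> is_pmf (q n).
Hypothesis HX0 : pX 0%nat = delta0.
Hypothesis HXS : forall n k, (1 <= n)%nat ->
  infinite_sum (fun i => pX (n - 1)%nat i * conv (convpow (p n) i) (q n) k) (pX n k).
Hypothesis Hrho : forall n, (1 <= n)%nat -> infinite_sum (fun j => INR j * p n j) (rho n).
Hypothesis Hg2 : forall n, (1 <= n)%nat ->
  infinite_sum (fun j => INR j * (INR j - 1) * p n j) (g2 n).
Hypothesis Hm1 : forall n, (1 <= n)%nat -> infinite_sum (fun j => INR j * q n j) (m1 n).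
Hypothesis Hm2 : forall n, (1 <= n)%nat ->
  infinite_sum (fun j => INR j * (INR j - 1) * q n j) (m2 n).
Hypothesis Hi1 : forall n, (1 <= n)%nat -> rho n < 1.
Hypothesis Hi2 : Un_cv rho 1.
Hypothesis Hi3 : cv_infty (fun N => sum_f_R0 (fun n => 1 - rho (S n)) N).
Hypothesis Hi4 : Un_cv (fun n => g2 (S n) / (1 - rho (S n))) 0.
Hypothesis Hii1 : Un_cv (fun n => m1 (S n) / (1 - rho (S n))) lambda.
Hypothesis Hii2 : Un_cv (fun n => m2 (S n) / (1 - rho (S n))) 0.

Lemma offspring_pmf (n : nat) : is_pmf (p (S n)).
Proof. apply Hp. lia. Qed.

Lemma immigration_pmf (n : nat) : is_pmf (q (S n)).
Proof. apply Hq. lia. Qed.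

Lemma generation_series (n k : nat) :
  is_series (fun i => pX n i * conv (convpow (p (S n)) i) (q (S n)) k) (pX (S n) k).
Proof.
  apply is_series_Reals. pose proof (HXS (S n) k ltac:(lia)) as H.
  rewrite Nat.sub_succ, Nat.sub_0_r in H. exact H.
Qed.

Lemma law_is_pmf (n : nat) : is_pmf (pX n).
Proof.
  induction n as [|n IH].
  - rewrite HX0. exact delta0_is_pmf.
  - exact (proj1 (branching_step _ _ _ _ IH (offspring_pmf n) (immigration_pmf n)
                                 (generation_series n))).
Qed.

Lemma law_pgf_step (n : nat) (s : R) : 0 <= s <= 1 ->
  pgf (pX (S n)) s = pgf (pX n) (pgf (p (S n)) s) * pgf (q (S n)) s.
Proof.
  exact (proj2 (branching_step _ _ _ _ (law_is_pmf n) (offspring_pmf n)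
                               (immigration_pmf n) (generation_series n)) s).
Qed.

Lemma moments_nonneg (n : nat) :
  0 <= rho (S n) /\ 0 <= g2 (S n) /\ 0 <= m1 (S n) /\ 0 <= m2 (S n).
Proof.
  destruct (factorial_moments_nonneg _ _ _ (offspring_pmf n)
              (proj2 (is_series_Reals _ _) (Hrho (S n) ltac:(lia)))
              (proj2 (is_series_Reals _ _) (Hg2 (S n) ltac:(lia)))).
  destruct (factorial_moments_nonneg _ _ _ (immigration_pmf n)
              (proj2 (is_series_Reals _ _) (Hm1 (S n) ltac:(lia)))
              (proj2 (is_series_Reals _ _) (Hm2 (S n) ltac:(lia)))).
  tauto.
Qed.

Lemma offspring_second_order (n : nat) (s : R) : 0 <= s <= 1 ->
  0 <= pgf (p (S n)) s - 1 + rho (S n) * (1 - s) <= g2 (S n) * ((1 - s) ^ 2 / 2).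
Proof.
  intro Hs. apply pgf_second_order; [apply offspring_pmf | exact Hs | |];
    apply is_series_Reals; [apply Hrho | apply Hg2]; lia.
Qed.

Lemma immigration_second_order (n : nat) (s : R) : 0 <= s <= 1 ->
  0 <= pgf (q (S n)) s - 1 + m1 (S n) * (1 - s) <= m2 (S n) * ((1 - s) ^ 2 / 2).
Proof.
  intro Hs. apply pgf_second_order; [apply immigration_pmf | exact Hs | |];
    apply is_series_Reals; [apply Hm1 | apply Hm2]; lia.
Qed.

(* lambda is a limit of nonnegative ratios m_{n,1} / (1 - rho_n). *)
Lemma lambda_nonneg : 0 <= lambda.
Proof.
  refine (Rle_cv_lim _ (Un_cv_const 0) Hii1). intro n.
  destruct (moments_nonneg n) as [_ [_ [Hm1n _]]].
  pose proof (Hi1 (S n) ltac:(lia)).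
  apply Rmult_le_pos; [exact Hm1n | left; apply Rinv_0_lt_compat; lra].
Qed.

Definition pgf_error_bound : nat -> R :=
  err_bound rho (fun n => step_bound lambda (rho n) (m1 n) (m2 n) (g2 n)) lambda.

Lemma pgf_error_bound_nonneg (n : nat) : 0 <= pgf_error_bound n.
Proof.
  apply err_bound_nonneg; [intro k; apply moments_nonneg | | apply lambda_nonneg].
  intro k. apply step_bound_nonneg; [apply lambda_nonneg | apply moments_nonneg..].
Qed.

Lemma pgf_error (n : nat) (s : R) : 0 <= s <= 1 ->
  Rabs (pgf (pX n) s - exp (- lambda * (1 - s))) <= pgf_error_bound n * (1 - s).
Proof.
  pose proof lambda_nonneg as Hlam.
  revert s. induction n as [|n IH]; intros s Hs.
  - rewrite HX0, delta0_pgf. change (pgf_error_bound 0) with lambda.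
    destruct (exp_neg_second_order (lambda * (1 - s)) ltac:(nra)) as [Hlo _].
    pose proof (exp_le_one_nonpos (- lambda * (1 - s)) ltac:(nra)).
    rewrite Ropp_mult_distr_l in Hlo. rewrite Rabs_pos_eq by lra. lra.
  - rewrite law_pgf_step by exact Hs.
    set (t := pgf (p (S n)) s). set (h := pgf (q (S n)) s).
    assert (Ht : 0 <= t <= 1) by (apply pgf_range; [apply offspring_pmf | exact Hs]).
    assert (Hh : 0 <= h <= 1) by (apply pgf_range; [apply immigration_pmf | exact Hs]).
    pose proof (offspring_second_order n s Hs) as Hgen. fold t in Hgen.
    pose proof (immigration_second_order n s Hs) as Himm. fold h in Himm.
    destruct (moments_nonneg n) as [Hrho0 [Hg0 [Hm10 Hm20]]].
    pose proof (step_estimate lambda (rho (S n)) (m1 (S n)) (m2 (S n)) (g2 (S n))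
                  (1 - s) t h Hlam Hm10 Hm20 Hg0 ltac:(lra) (proj2 Ht) Hgen Himm) as Hstep.
    pose proof (IH t Ht) as IHt. pose proof (pgf_error_bound_nonneg n).
    change (pgf_error_bound (S n))
      with (rho (S n) * pgf_error_bound n
            + step_bound lambda (rho (S n)) (m1 (S n)) (m2 (S n)) (g2 (S n))).
    replace (pgf (pX n) t * h - exp (- lambda * (1 - s)))
      with ((pgf (pX n) t - exp (- lambda * (1 - t))) * h
            + (exp (- lambda * (1 - t)) * h - exp (- lambda * (1 - s)))) by ring.
    eapply Rle_trans; [apply Rabs_triang|].
    rewrite Rabs_mult, (Rabs_pos_eq h) by lra.
    (* the previous error is contracted: 1 - t <= rho (1 - s) *)
    assert (Hcontr : pgf_error_bound n * (1 - t) <= pgf_error_bound n * (rho (S n) * (1 - s)))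
      by (apply Rmult_le_compat_l; lra).
    pose proof (Rabs_pos (pgf (pX n) t - exp (- lambda * (1 - t)))).
    nra.
Qed.

Lemma pgf_error_bound_cv : Un_cv pgf_error_bound 0.
Proof.
  apply err_bound_cv.
  - intro n. split; [apply moments_nonneg | apply Hi1; lia].
  - intro n. apply step_bound_nonneg; [apply lambda_nonneg | apply moments_nonneg..].
  - apply lambda_nonneg.
  - apply (step_bound_ratio_cv lambda (fun n => rho (S n)) (fun n => g2 (S n))
             (fun n => m1 (S n)) (fun n => m2 (S n))); try assumption.
    + intro n. apply Hi1. lia.
    + exact (Un_cv_shift rho 1 Hi2).
  - exact Hi3.
Qed.

Lemma law_cv_poisson (k : nat) : Un_cv (fun n => pX n k) (poisson_pmf lambda k).
Proof.
  apply pgf_coefficients_cv; [exact law_is_pmf | apply poisson_is_pmf, lambda_nonneg |].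
  intros s Hs eta Heta. rewrite poisson_pgf.
  destruct (pgf_error_bound_cv eta Heta) as [N HN]. exists N. intros n Hn.
  specialize (HN n Hn). unfold Rdist in *.
  rewrite Rminus_0_r, Rabs_pos_eq in HN by apply pgf_error_bound_nonneg.
  pose proof (pgf_error n s ltac:(lra)). pose proof (pgf_error_bound_nonneg n).
  assert (pgf_error_bound n * (1 - s) <= pgf_error_bound n) by nra.
  lra.
Qed.

End BranchingWithImmigration.

Theorem theorem2
  (p q : nat -> nat -> R) (pX : nat -> nat -> R)
  (rho g2 m1 m2 : nat -> R) (lambda : R)
  (Hp : forall n, (1 <= n)%nat -> is_pmf (p n))
  (Hq : forall n, (1 <= n)%nat -> is_pmf (q n))
  (HX0 : pX 0%nat = delta0)
  (HXS : forall n k, (1 <= n)%nat ->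
      infinite_sum (fun i => pX (n - 1)%nat i * conv (convpow (p n) i) (q n) k)
                   (pX n k))
  (Hrho : forall n, (1 <= n)%nat ->
      infinite_sum (fun j => INR j * p n j) (rho n))
  (Hg2 : forall n, (1 <= n)%nat ->
      infinite_sum (fun j => INR j * (INR j - 1) * p n j) (g2 n))
  (Hm1 : forall n, (1 <= n)%nat ->
      infinite_sum (fun j => INR j * q n j) (m1 n))
  (Hm2 : forall n, (1 <= n)%nat ->
      infinite_sum (fun j => INR j * (INR j - 1) * q n j) (m2 n))
  (Hi1 : forall n, (1 <= n)%nat -> rho n < 1)
  (Hi2 : Un_cv rho 1)
  (Hi3 : cv_infty (fun N => sum_f_R0 (fun n => 1 - rho (S n)) N))
  (Hi4 : Un_cv (fun n => g2 (S n) / (1 - rho (S n))) 0)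
  (Hii1 : Un_cv (fun n => m1 (S n) / (1 - rho (S n))) lambda)
  (Hii2 : Un_cv (fun n => m2 (S n) / (1 - rho (S n))) 0) :
  forall k : nat,
    Un_cv (fun n => sum_f_R0 (pX n) k) (sum_f_R0 (poisson_pmf lambda) k).
Proof.
  intro k.
  rewrite sum_f_R0_below.
  refine (Un_cv_ext _ _ (fun n => eq_sym (sum_f_R0_below (pX n) k)) _ _).
  apply (sum_below_cv (fun n => pX n)). intros j _.
  exact (law_cv_poisson p q pX rho g2 m1 m2 lambda Hp Hq HX0 HXS Hrho Hg2 Hm1 Hm2
           Hi1 Hi2 Hi3 Hi4 Hii1 Hii2 j).
Qed.
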